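(* Let $D$ be a division ring and $R$ a maximal subring of $D$ which is a left duo ring. Then $R$ is a duo ring, and either $R$ is a division ring or $R$ is an Ore $G$-domain with exactly one nonzero prime ideal, namely $M=R\setminus U(R)$. Moreover, if $R$ is not a division ring, then $R$ is a valuation ring for $D$ (for each $x\in D^*$, $x\in R$ or $x^{-1}\in R$), $Max_l(R)=Max_r(R)=Max(R)=Spec(R)\setminus\{0\}=\{M\}$, and $dRd^{-1}=R$ and $dMd^{-1}=M$ for every $d\in D^*$.
   Context: All rings are associative unital and subrings share the identity. A maximal subring of a ring $T$ is a proper subring maximal under inclusion among proper subrings of $T$. A ring is left (right) duo if every left (right) ideal is two-sided; duo means both. $U(R)$ is the unit group, $D^*=D\setminus\{0\}$; $Max_l(R)$, $Max_r(R)$, $Max(R)$, $Spec(R)$ denote the sets of maximal left ideals, maximal right ideals, maximal ideals, and prime ideals. A $G$-domain is a domain in which the intersection of all nonzero prime ideals is nonzero. *)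

(* D is a (possibly noncommutative) division ring, modelled as a
   unitRingType (nontrivial ring with computable inverses) in which every nonzero
   element is a unit. *)
From mathcomp Require Import all_boot all_algebra.
Set Implicit Arguments. Unset Strict Implicit. Unset Printing Implicit Defensive.
Import GRing.Theory.
Local Open Scope ring_scope.

Definition division_ringP (D : unitRingType) : Prop :=
  forall x : D, x <> 0 -> x \is a GRing.unit.

Section Defs.
Variable D : unitRingType.
Implicit Types (R S I J P A B : D -> Prop).

Definition subset_of A B : Prop := forall x, A x -> B x.
Definition seteq A B : Prop := forall x, A x <-> B x.

Definition is_subring S : Prop :=
  S 1 /\ (forall x y, S x -> S y -> S (x - y)) /\ (forall x y, S x -> S y -> S (x * y)).

Definition maximal_subring R : Prop :=
  is_subring R /\ (exists x, ~ R x) /\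
  forall S, is_subring S -> subset_of R S -> (exists x, ~ S x) -> seteq S R.

Definition additive_sub R I : Prop :=
  subset_of I R /\ I 0 /\ (forall x y, I x -> I y -> I (x - y)).
Definition left_ideal R I : Prop :=
  additive_sub R I /\ (forall r x, R r -> I x -> I (r * x)).
Definition right_ideal R I : Prop :=
  additive_sub R I /\ (forall r x, R r -> I x -> I (x * r)).
Definition ideal R I : Prop := left_ideal R I /\ right_ideal R I.

Definition left_duo R : Prop := forall I, left_ideal R I -> ideal R I.
Definition right_duo R : Prop := forall I, right_ideal R I -> ideal R I.
Definition duo R : Prop := left_duo R /\ right_duo R.

Definition unit_of R x : Prop := R x /\ exists y, R y /\ x * y = 1 /\ y * x = 1.
Definition nonunits R : D -> Prop := fun x => R x /\ ~ unit_of R x.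

Definition is_division R : Prop := forall x, R x -> x <> 0 -> unit_of R x.

Definition is_domain R : Prop :=
  forall x y, R x -> R y -> x * y = 0 -> x = 0 \/ y = 0.
Definition right_ore R : Prop :=
  forall a b, R a -> R b -> a <> 0 -> b <> 0 ->
  exists r s, R r /\ R s /\ r <> 0 /\ s <> 0 /\ a * r = b * s.
Definition left_ore R : Prop :=
  forall a b, R a -> R b -> a <> 0 -> b <> 0 ->
  exists r s, R r /\ R s /\ r <> 0 /\ s <> 0 /\ r * a = s * b.
Definition ore_domain R : Prop := is_domain R /\ left_ore R /\ right_ore R.

Definition nonzero_set I : Prop := exists x, I x /\ x <> 0.

Definition prime_ideal R P : Prop :=
  ideal R P /\ (exists x, R x /\ ~ P x) /\
  forall A B, ideal R A -> ideal R B ->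
    (forall a b, A a -> B b -> P (a * b)) -> subset_of A P \/ subset_of B P.

Definition G_domain R : Prop :=
  is_domain R /\
  exists x, R x /\ x <> 0 /\ forall P, prime_ideal R P -> nonzero_set P -> P x.

Definition maximal_left_ideal R I : Prop :=
  left_ideal R I /\ (exists x, R x /\ ~ I x) /\
  forall J, left_ideal R J -> subset_of I J -> (exists x, R x /\ ~ J x) -> seteq J I.
Definition maximal_right_ideal R I : Prop :=
  right_ideal R I /\ (exists x, R x /\ ~ I x) /\
  forall J, right_ideal R J -> subset_of I J -> (exists x, R x /\ ~ J x) -> seteq J I.
Definition maximal_ideal R I : Prop :=
  ideal R I /\ (exists x, R x /\ ~ I x) /\
  forall J, ideal R J -> subset_of I J -> (exists x, R x /\ ~ J x) -> seteq J I.

Definition conj_stable (d : D) A : Prop :=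
  forall y, A y <-> exists a, A a /\ y = d * a * d^-1.
End Defs.

(* For 0 <> y in R, the left ideal Ry is two-sided because R is left duo, so
   y R y^-1 is contained in R, and maximality of R upgrades this to y^-1 R y in R.
   Hence whenever a normalises R but a^-1 is not in R, maximality forces D to be
   the ring R[a^-1] of left polynomials sum r_i a^-i, so every d in D has
   d a^k in R for some k.  With d = (1 - y)^-1 and the geometric series this makes
   R local, with maximal ideal M = R \ U(R).  If neither x nor x^-1 lies in R, the
   same device shows that x normalises R and that 1 is a polynomial both in x and
   in x^-1 with coefficients in M; lowering degrees with 1 - M in U(R) rules this
   out, so R is a valuation ring.  Finally, for a nonzero prime P containing
   p <> 0 and 0 <> m in M, some p^-1 m^k lies in R, so m^k is in P and then m is
   in P: M is the only nonzero prime. *)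

From mathcomp Require Import all_boot all_algebra.
From Stdlib Require Import Classical.
Set Implicit Arguments. Unset Strict Implicit. Unset Printing Implicit Defensive.
Import GRing.Theory.
Local Open Scope ring_scope.

Section Subring.
Variables (D : unitRingType) (R : D -> Prop).
Hypothesis subR : is_subring R.

Lemma subring1 : R 1. Proof. by case: subR. Qed.

Lemma subringB x y : R x -> R y -> R (x - y).
Proof. by case: subR => _ [subB _]; apply: subB. Qed.

Lemma subringM x y : R x -> R y -> R (x * y).
Proof. by case: subR => _ [_ mulM]; apply: mulM. Qed.

Lemma subring0 : R 0. Proof. by rewrite -(subrr 1); apply: subringB subring1 subring1. Qed.

Lemma subringN x : R x -> R (- x).
Proof. by move=> Rx; rewrite -sub0r; apply: subringB subring0 Rx. Qed.

Lemma subringD x y : R x -> R y -> R (x + y).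
Proof. by move=> Rx Ry; rewrite -[y]opprK; apply/subringB/subringN. Qed.

Lemma subringX x n : R x -> R (x ^+ n).
Proof.
move=> Rx; elim: n => [|n IHn]; first by rewrite expr0; apply: subring1.
by rewrite exprS; apply: subringM.
Qed.

Lemma subring_sum n (F : 'I_n -> D) : (forall i, R (F i)) -> R (\sum_i F i).
Proof. by move=> RF; apply: big_ind => //; [apply: subring0 | apply: subringD]. Qed.

End Subring.

Lemma unit_ofP (D : unitRingType) (R : D -> Prop) x :
  unit_of R x <-> [/\ R x, x \is a GRing.unit & R x^-1].
Proof.
split=> [[Rx [y [Ry [xy1 yx1]]]] | [Rx Ux Rxi]].
  have Ux : x \is a GRing.unit by apply/unitrP; exists y.
  by split=> //; rewrite -[x^-1]mulr1 -xy1 mulKr.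
by split=> //; exists x^-1; rewrite mulrV ?mulVr.
Qed.

Lemma unitr_neq0 (D : unitRingType) (x : D) : x \is a GRing.unit -> x != 0.
Proof. by apply: contraTneq => ->; rewrite unitr0. Qed.

Lemma unit_of_neq0 (D : unitRingType) (R : D -> Prop) x : unit_of R x -> x != 0.
Proof. by case/unit_ofP=> _ /unitr_neq0. Qed.

Lemma unit_of_nonunitsN (D : unitRingType) (R : D -> Prop) x :
  R x -> ~ nonunits R x -> unit_of R x.
Proof. by move=> Rx notMx; apply: NNPP => notUx; apply: notMx. Qed.

Lemma nonunits_nonzero (D : unitRingType) (R : D -> Prop) :
  ~ is_division R -> nonzero_set (nonunits R).
Proof.
move=> ndR; apply: NNPP => noM; apply: ndR => y Ry nz_y.
by apply: unit_of_nonunitsN => // My; apply: noM; exists y.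
Qed.

Lemma conj_stableP (D : unitRingType) (A : D -> Prop) x : x \is a GRing.unit ->
  (forall a, A a -> A (x * a * x^-1)) -> (forall a, A a -> A (x^-1 * a * x)) ->
  conj_stable x A.
Proof.
move=> Ux Aconj AconjV y; split=> [Ay | [a [Aa ->]]]; last exact: Aconj.
by exists (x^-1 * y * x); split; [apply: AconjV | rewrite !mulrA mulrV // mul1r mulrK].
Qed.

Definition normalizes (D : unitRingType) (R : D -> Prop) (x : D) :=
  [/\ x \is a GRing.unit, forall r, R r -> R (x * r * x^-1)
    & forall r, R r -> R (x^-1 * r * x)].

Section Normalizer.
Variables (D : unitRingType) (R : D -> Prop).

Lemma normalizesV x : normalizes R x -> normalizes R x^-1.
Proof. by case=> Ux Rconj RconjV; split; rewrite ?unitrV ?invrK. Qed.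

Lemma normalizesM x y : normalizes R x -> normalizes R y -> normalizes R (x * y).
Proof.
case=> Ux Rx RxV [Uy Ry RyV]; split; first by rewrite unitrMl.
  move=> r Rr; rewrite invrM //.
  have -> : x * y * r * (y^-1 / x) = x * (y * r * y^-1) * x^-1 by rewrite !mulrA.
  exact/Rx/Ry.
move=> r Rr; rewrite invrM //.
have -> : y^-1 / x * r * (x * y) = y^-1 * (x^-1 * r * x) * y by rewrite !mulrA.
exact/RyV/RxV.
Qed.

Lemma normalizesX x n : normalizes R x -> normalizes R (x ^+ n).
Proof.
move=> Nx; elim: n => [|n IHn]; last by rewrite exprS; apply: normalizesM.
by rewrite expr0; split; rewrite ?unitr1 // => r; rewrite invr1 mulr1 mul1r.
Qed.

Lemma normalizes_conj_stable x : normalizes R x -> conj_stable x R.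
Proof. by case; apply: conj_stableP. Qed.

End Normalizer.

Inductive lpoly (D : unitRingType) (C : D -> Prop) (x : D) (k : nat) : D -> Prop :=
| lpoly0 : lpoly C x k 0
| lpoly_cons i c y : C c -> (i <= k)%N -> lpoly C x k y -> lpoly C x k (c * x ^+ i + y).

Definition adjoin (D : unitRingType) (C : D -> Prop) (x y : D) := exists k, lpoly C x k y.

Lemma mulr_exprV_expr (D : unitRingType) (x : D) i n :
  x \is a GRing.unit -> (i <= n)%N -> x^-1 ^+ i * x ^+ n = x ^+ (n - i).
Proof.
move=> Ux le_in; rewrite -{1}(subnKC le_in) exprD mulrA exprVn mulVr ?mul1r //.
exact: unitrX.
Qed.

Section LeftPolynomials.
Variables (D : unitRingType) (x : D).
Implicit Types (C R : D -> Prop).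

Lemma lpolyD C k y z : lpoly C x k y -> lpoly C x k z -> lpoly C x k (y + z).
Proof.
elim=> [|i c y' Cc le_ik _ IHy] Pz; first by rewrite add0r.
by rewrite -addrA; apply: lpoly_cons => //; apply: IHy.
Qed.

Lemma lpoly_lmul C C' a k y :
  (forall c, C c -> C' (a * c)) -> lpoly C x k y -> lpoly C' x k (a * y).
Proof.
move=> CC'; elim=> [|i c y' Cc le_ik _ IHy]; first by rewrite mulr0; apply: lpoly0.
by rewrite mulrDr mulrA; apply: lpoly_cons => //; apply: CC'.
Qed.

Lemma lpolyN C k y : (forall c, C c -> C (- c)) -> lpoly C x k y -> lpoly C x k (- y).
Proof. by move=> CN Py; rewrite -mulN1r; apply: lpoly_lmul Py => c; rewrite mulN1r; apply: CN. Qed.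

Lemma lpoly_widen C k l y : (k <= l)%N -> lpoly C x k y -> lpoly C x l y.
Proof.
move=> le_kl; elim=> [|i c y' Cc le_ik _ IHy]; first exact: lpoly0.
by apply: lpoly_cons => //; apply: leq_trans le_kl.
Qed.

Lemma lpoly_monomial C k i c : C c -> (i <= k)%N -> lpoly C x k (c * x ^+ i).
Proof. by move=> Cc le_ik; rewrite -[_ * _]addr0; apply: lpoly_cons => //; apply: lpoly0. Qed.

Section ConjStable.
Variable C : D -> Prop.
Hypotheses (Ux : x \is a GRing.unit) (Cconj : forall c, C c -> C (x * c * x^-1)).

Lemma lpoly_mulX k y : lpoly C x k y -> lpoly C x k.+1 (x * y).
Proof.
elim=> [|i c y' Cc le_ik _ IHy]; first by rewrite mulr0; apply: lpoly0.
have -> : x * (c * x ^+ i + y') = x * c * x^-1 * x ^+ i.+1 + x * y'.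
  by rewrite mulrDr exprS !mulrA mulrVK.
by apply: lpoly_cons => //; apply: Cconj.
Qed.

Lemma lpoly_mulXn n k y : lpoly C x k y -> lpoly C x (n + k) (x ^+ n * y).
Proof.
move=> Py; elim: n => [|n IHn]; first by rewrite expr0 mul1r.
by rewrite exprS -mulrA addSn; apply: lpoly_mulX.
Qed.

Lemma lpolyM k l y z : (forall c d, C c -> C d -> C (c * d)) ->
  lpoly C x k y -> lpoly C x l z -> lpoly C x (k + l) (y * z).
Proof.
move=> CM; elim=> [|i c y' Cc le_ik _ IHy] Pz; first by rewrite mul0r; apply: lpoly0.
rewrite mulrDl; apply: lpolyD; last exact: IHy.
rewrite -mulrA; apply: (lpoly_lmul (CM c^~ Cc)).
by apply: lpoly_widen (lpoly_mulXn i Pz); rewrite leq_add2r.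
Qed.

End ConjStable.

Lemma lpoly_splitX C k y : C 0 -> (forall c d, C c -> C d -> C (c + d)) ->
  lpoly C x k.+1 y -> exists y' c, [/\ lpoly C x k y', C c & y = y' + c * x ^+ k.+1].
Proof.
move=> C0 CD; elim=> [|i c y' Cc le_ik _ [z [c' [Pz Cc' ->]]]].
  by exists 0, 0; split=> //; [apply: lpoly0 | rewrite mul0r addr0].
have [-> | ne_ik] := eqVneq i k.+1.
  by exists z, (c + c'); split; [| apply: CD | rewrite mulrDl addrCA].
exists (c * x ^+ i + z), c'; split=> //; last by rewrite addrA.
by apply: lpoly_cons => //; rewrite -ltnS ltn_neqAle ne_ik.
Qed.

Lemma lpoly0E C y : C 0 -> (forall c d, C c -> C d -> C (c + d)) -> lpoly C x 0 y -> C y.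
Proof.
move=> C0 CD; elim=> [|i c y' Cc le_i0 _ Cy'] //.
by move: le_i0; rewrite leqn0 => /eqP ->; rewrite expr0 mulr1; apply: CD.
Qed.

Lemma lpoly_reflect C k y :
  x \is a GRing.unit -> lpoly C x^-1 k y -> lpoly C x k (y * x ^+ k).
Proof.
move=> Ux; elim=> [|i c y' Cc le_ik _ IHy]; first by rewrite mul0r; apply: lpoly0.
rewrite mulrDl -mulrA mulr_exprV_expr //.
by apply: lpoly_cons => //; apply: leq_subr.
Qed.

Lemma lpoly_subring R k y : is_subring R -> R x -> lpoly R x k y -> R y.
Proof.
move=> subR Rx; elim=> [|i c y' Rc _ _ Ry']; first exact: subring0.
by apply: subringD => //; apply: subringM => //; apply: subringX.
Qed.

Lemma adjoin_subset R : subset_of R (adjoin R x).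
Proof. by move=> r Rr; exists 0%N; rewrite -[r]mulr1 -(expr0 x); apply: lpoly_monomial. Qed.

Lemma adjoin_subring R : is_subring R -> x \is a GRing.unit ->
  (forall r, R r -> R (x * r * x^-1)) -> is_subring (adjoin R x).
Proof.
move=> subR Ux Rconj; split; [|split].
- exact: adjoin_subset (subring1 subR).
- move=> a b [k Pa] [l Pb]; exists (maxn k l); apply: lpolyD.
    by apply: lpoly_widen Pa; rewrite leq_maxl.
  by apply: lpolyN (lpoly_widen _ Pb) => [c|]; [apply: subringN | rewrite leq_maxr].
- move=> a b [k Pa] [l Pb]; exists (k + l)%N; apply: lpolyM => //.
  by move=> c d; apply: subringM.
Qed.

Lemma adjoinX R : is_subring R -> adjoin R x x.
Proof.
by move=> subR; exists 1%N; have := lpoly_monomial (subring1 subR) (leqnn 1); rewrite mul1r.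
Qed.

End LeftPolynomials.

Definition lprincipal (D : unitRingType) (R : D -> Prop) (c : D) : D -> Prop :=
  fun z => exists r, R r /\ z = r * c.

Definition proper_in (D : unitRingType) (R I : D -> Prop) := exists x, R x /\ ~ I x.

Definition maximal_among (D : unitRingType) (R : D -> Prop) (K : (D -> Prop) -> Prop) I :=
  K I /\ proper_in R I /\ forall J, K J -> subset_of I J -> proper_in R J -> seteq J I.

Lemma maximal_among_greatest (D : unitRingType) (R : D -> Prop) K I0 :
  K I0 -> proper_in R I0 -> (forall I, K I -> proper_in R I -> subset_of I I0) ->
  maximal_among R K I0 /\ forall I, maximal_among R K I -> seteq I I0.
Proof.
move=> KI0 properI0 sub0; split.
  by split=> //; split=> // J KJ subI0J properJ y; split; [apply: sub0 | apply: subI0J].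
move=> I [KI [properI maxI]] y; have subII0 := sub0 I KI properI.
by have := maxI I0 KI0 subII0 properI0 y; tauto.
Qed.

Section SubringIdeals.
Variables (D : unitRingType) (R : D -> Prop).
Hypothesis subR : is_subring R.

Lemma lprincipal_self c : lprincipal R c c.
Proof. by exists 1; split; [apply: subring1 | rewrite mul1r]. Qed.

Lemma lprincipal_left_ideal c : R c -> left_ideal R (lprincipal R c).
Proof.
move=> Rc; split; [split; [|split]|].
- by move=> _ [r [Rr ->]]; apply: subringM.
- by exists 0; split; [apply: subring0 | rewrite mul0r].
- by move=> _ _ [r [Rr ->]] [s [Rs ->]]; exists (r - s); split; [apply: subringB | rewrite mulrBl].
- by move=> a _ Ra [r [Rr ->]]; exists (a * r); split; [apply: subringM | rewrite mulrA].
Qed.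

Lemma lprincipal_ideal c : R c -> normalizes R c -> ideal R (lprincipal R c).
Proof.
move=> Rc [Uc Rconj _]; have [addI lI] := lprincipal_left_ideal Rc; split=> //; split=> //.
move=> a _ Ra [r [Rr ->]]; exists (r * (c * a * c^-1)).
by split; [exact: (subringM subR Rr (Rconj _ Ra)) | rewrite !mulrA mulrVK].
Qed.

Lemma left_ideal_nonunits I : left_ideal R I -> proper_in R I -> subset_of I (nonunits R).
Proof.
move=> [[IR _] lI] [x [Rx notIx]] z Iz; split; first exact: IR.
case/unit_ofP=> _ Uz Rzi; apply: notIx.
by rewrite -[x]mulr1 -(mulVr Uz) mulrA; apply: (lI _ _ _ Iz); apply: (subringM subR Rx Rzi).
Qed.

Lemma right_ideal_nonunits I : right_ideal R I -> proper_in R I -> subset_of I (nonunits R).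
Proof.
move=> [[IR _] rI] [x [Rx notIx]] z Iz; split; first exact: IR.
case/unit_ofP=> _ Uz Rzi; apply: notIx.
by rewrite -[x]mul1r -(mulrV Uz) -mulrA; apply: (rI _ _ _ Iz); apply: (subringM subR Rzi Rx).
Qed.

Lemma nonunits1 : ~ nonunits R 1.
Proof. by case=> _; apply; apply/unit_ofP; rewrite invr1 unitr1; split=> //; apply: subring1. Qed.

Lemma nonunits_proper : proper_in R (nonunits R).
Proof. by exists 1; split; [apply: subring1 | apply: nonunits1]. Qed.

Lemma nonunits0 : nonunits R 0.
Proof. by split; [apply: subring0 | move/unit_of_neq0; rewrite eqxx]. Qed.

Lemma nonunits_conj x m : normalizes R x -> nonunits R m -> nonunits R (x * m * x^-1).
Proof.
case=> Ux Rconj RconjV [Rm notUm]; split; first exact: Rconj.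
case/unit_ofP=> _ Uxm Rxmi; apply: notUm.
have Um : m \is a GRing.unit by move: Uxm; rewrite unitrMl ?unitrV // unitrMr.
apply/unit_ofP; split=> //.
have -> : m^-1 = x^-1 * (x * m * x^-1)^-1 * x.
  by rewrite !invrM ?unitrMl ?unitrV // invrK !mulrA mulVr // mul1r mulrVK.
exact: RconjV.
Qed.

Lemma nonunits_conj_stable x : normalizes R x -> conj_stable x (nonunits R).
Proof.
move=> Nx; have [Ux _ _] := Nx; apply: conj_stableP Ux _ _ => m Mm; first exact: nonunits_conj.
by rewrite -{2}[x]invrK; apply: nonunits_conj Mm; apply: normalizesV.
Qed.

End SubringIdeals.

Section DivisionRing.
Variable D : unitRingType.
Hypothesis divD : division_ringP D.

Lemma divring_unit (x : D) : x != 0 -> x \is a GRing.unit.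
Proof. by move/eqP; apply: divD. Qed.

Lemma divring_mul_eq0 (x y : D) : x * y = 0 -> x = 0 \/ y = 0.
Proof.
have [-> | nz_x] := eqVneq x 0; first by left.
by move=> xy0; right; rewrite -(mulKr (divring_unit nz_x) y) xy0 mulr0.
Qed.

Variable R : D -> Prop.
Hypothesis subR : is_subring R.

Lemma unit_of_divring x : R x -> x != 0 -> R x^-1 -> unit_of R x.
Proof. by move=> Rx nz_x Rxi; apply/unit_ofP; split=> //; apply: divring_unit. Qed.

Lemma nonunits_inv x : nonunits R x -> x != 0 -> ~ R x^-1.
Proof. by case=> Rx notUx nz_x Rxi; apply: notUx; apply: unit_of_divring. Qed.

Lemma nonunits_lmul r m : R r -> nonunits R m -> nonunits R (r * m).
Proof.
move=> Rr [Rm notUm]; split; first exact: (subringM subR Rr Rm).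
case/unit_ofP=> _ Urm Rrmi; apply: notUm.
have nz_r : r != 0 by apply: contraTneq Urm => ->; rewrite mul0r unitr0.
have nz_m : m != 0 by apply: contraTneq Urm => ->; rewrite mulr0 unitr0.
apply: unit_of_divring => //; have -> : m^-1 = (r * m)^-1 * r.
  by rewrite invrM ?mulrVK ?divring_unit.
exact: (subringM subR Rrmi Rr).
Qed.

Lemma nonunits_rmul r m : R r -> nonunits R m -> nonunits R (m * r).
Proof.
move=> Rr [Rm notUm]; split; first exact: (subringM subR Rm Rr).
case/unit_ofP=> _ Umr Rmri; apply: notUm.
have nz_r : r != 0 by apply: contraTneq Umr => ->; rewrite mulr0 unitr0.
have nz_m : m != 0 by apply: contraTneq Umr => ->; rewrite mul0r unitr0.
apply: unit_of_divring => //; have -> : m^-1 = r * (m * r)^-1.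
  by rewrite invrM ?mulVKr ?divring_unit.
exact: (subringM subR Rr Rmri).
Qed.

End DivisionRing.

Section MaximalSubring.
Variables (D : unitRingType) (R : D -> Prop).
Hypothesis maxR : maximal_subring R.

Lemma maximal_subring_adjoin x : x \is a GRing.unit ->
  (forall r, R r -> R (x * r * x^-1)) -> ~ R x -> forall d, adjoin R x d.
Proof.
move=> Ux Rconj notRx d; apply: NNPP => notAd; case: maxR => subR [_ maxS].
have [adjoinR _] := maxS _ (adjoin_subring subR Ux Rconj) (@adjoin_subset _ x R)
  (ex_intro (fun z => ~ adjoin R x z) d notAd) x.
exact: notRx (adjoinR (adjoinX x subR)).
Qed.

Lemma maximal_subring_conjV x : x \is a GRing.unit ->
  (forall r, R r -> R (x * r * x^-1)) -> forall r, R r -> R (x^-1 * r * x).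
Proof.
move=> Ux Rconj r Rr; case: maxR => subR [[d notRd] maxS].
pose T z := R (x * z * x^-1).
have subT : is_subring T.
  split; first by rewrite /T mulr1 mulrV //; apply: subring1.
  split=> a b Ta Tb; first by rewrite /T mulrBr mulrBl; apply: (subringB subR Ta Tb).
  have -> : T (a * b) = R ((x * a * x^-1) * (x * b * x^-1)) by rewrite /T !mulrA mulrVK.
  exact: (subringM subR Ta Tb).
have notTd : ~ T (x^-1 * d * x) by rewrite /T !mulrA mulrV // mul1r mulrK.
have [TR _] := maxS T subT Rconj (ex_intro (fun z => ~ T z) _ notTd) (x^-1 * r * x).
by apply: TR; rewrite /T !mulrA mulrV // mul1r mulrK.
Qed.

End MaximalSubring.

Section MaximalLeftDuo.
Variables (D : unitRingType) (R : D -> Prop).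
Hypotheses (divD : division_ringP D) (maxR : maximal_subring R) (duoR : left_duo R).

Let subR : is_subring R := proj1 maxR.
Local Notation M := (nonunits R).

Lemma left_duo_conj y r : R y -> y != 0 -> R r -> R (y * r * y^-1).
Proof.
move=> Ry nz_y Rr; have [_ [_ rI]] := duoR (lprincipal_left_ideal subR Ry).
have [s [Rs ->]] := rI _ _ Rr (lprincipal_self subR y).
by rewrite mulrK // divring_unit.
Qed.

Lemma normalizes_nonzero y : R y -> y != 0 -> normalizes R y.
Proof.
move=> Ry nz_y; have Uy := divring_unit divD nz_y.
have Rconj r := @left_duo_conj y r Ry nz_y.
by split=> //; apply: maximal_subring_conjV.
Qed.

Lemma nonunits_mulXn a : M a -> a != 0 -> forall d, exists k, R (d * a ^+ k).
Proof.
move=> Ma nz_a d; have Ua := divring_unit divD nz_a.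
have [UaV RconjV _] := normalizesV (normalizes_nonzero Ma.1 nz_a).
have [k Pd] := maximal_subring_adjoin maxR UaV RconjV (nonunits_inv divD Ma nz_a) d.
by exists k; apply: (lpoly_subring subR Ma.1 (lpoly_reflect Ua Pd)).
Qed.

Lemma nonunits_subr1 y : M y -> ~ M (1 - y).
Proof.
move=> My M1y; have [R1y notU1y] := M1y.
have nz_y : y != 0 by apply: contraPneq M1y => ->; rewrite subr0; apply: nonunits1.
have nz_1y : 1 - y != 0.
  by apply: contraPneq My => /eqP; rewrite subr_eq0 => /eqP <-; apply: nonunits1.
have U1y := divring_unit divD nz_1y.
have [k Rk] := nonunits_mulXn My nz_y (1 - y)^-1.
apply: notU1y; apply: unit_of_divring => //.
have -> : (1 - y)^-1 = \sum_(i < k) y ^+ i + (1 - y)^-1 * y ^+ k.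
  have geom : (1 - y) * \sum_(i < k) y ^+ i = 1 - y ^+ k.
    by rewrite -opprB mulNr -subrX1 opprB.
  by rewrite -(mulKr U1y (\sum_(i < k) y ^+ i)) geom -mulrDr subrK mulr1.
by apply: (subringD subR) Rk; apply: (subring_sum subR) => i; apply: (subringX subR _ My.1).
Qed.

Lemma nonunitsD y z : M y -> M z -> M (y + z).
Proof.
move=> My Mz; split; first exact: (subringD subR My.1 Mz.1).
case/unit_ofP=> _ Uyz Rw; apply: (nonunits_subr1 (nonunits_lmul divD subR Rw My)).
have -> : 1 - (y + z)^-1 * y = (y + z)^-1 * z.
  by rewrite -[1](mulVr Uyz) mulrDr addrAC subrr add0r.
exact: (nonunits_lmul divD subR Rw Mz).
Qed.

Lemma unit_of_subr1 v : M v -> unit_of R (1 - v).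
Proof.
move=> Mv; apply: (unit_of_nonunitsN _ (nonunits_subr1 Mv)).
exact: (subringB subR (subring1 subR) Mv.1).
Qed.

Lemma nonunits_ideal : ideal R M.
Proof.
have addM : additive_sub R M.
  split; first by move=> z [].
  split; first exact: (nonunits0 subR).
  move=> y z My Mz; apply: nonunitsD My _.
  by rewrite -mulN1r; apply: (nonunits_lmul divD subR (subringN subR (subring1 subR)) Mz).
by split; split=> // r m Rr Mm; [apply: nonunits_lmul | apply: nonunits_rmul].
Qed.

Lemma lpoly_nonunits_lower_deg x m n : normalizes R x -> (n <= m)%N ->
  lpoly M x m.+1 1 -> lpoly M x^-1 n.+1 1 -> lpoly M x m 1.
Proof.
move=> Nx le_nm P1 P1'; have [Ux _ _] := Nx.
have M0 := nonunits0 subR.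
have MX c : M c -> M (x * c * x^-1) := nonunits_conj Nx.
(* Multiplying [1 \in M[x^-1]] by x^(n+1) gives x^(n+1) = z + v x^(n+1), deg z <= n, v in M. *)
have [z [v [Pz Mv e]]] := lpoly_splitX M0 nonunitsD (lpoly_reflect Ux P1').
rewrite mul1r in e.
have /unit_ofP[_ U1v R1vi] := unit_of_subr1 Mv.
have Pxn : lpoly M x n (x ^+ n.+1).
  have ez : z = (1 - v) * x ^+ n.+1 by rewrite mulrBl mul1r {1}e addrK.
  rewrite -[x ^+ _](mulKr U1v) -ez.
  exact: lpoly_lmul (fun c Mc => nonunits_lmul divD subR R1vi Mc) Pz.
have Pxm : lpoly M x m (x ^+ m.+1).
  by have := lpoly_mulXn Ux MX (m - n) Pxn; rewrite -exprD addnS subnK.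
have [y [c [Py Mc ->]]] := lpoly_splitX M0 nonunitsD P1.
exact: lpolyD Py (lpoly_lmul (fun d Md => nonunits_lmul divD subR Mc.1 Md) Pxm).
Qed.

Lemma no_lpoly_nonunits_one x m n : normalizes R x ->
  lpoly M x m 1 -> lpoly M x^-1 n 1 -> False.
Proof.
have M1 y : lpoly M y 0 1 -> False.
  by move=> P; apply: (nonunits1 subR); apply: (lpoly0E (nonunits0 subR) nonunitsD P).
move: {2}(m + n)%N (leqnn (m + n)) => N.
elim: N x m n => [|N IHN] x [|m] [|n] // le_mnN Nx P P'; try by [apply: M1 P | apply: M1 P'].
have [le_nm | lt_mn] := leqP n m.
  apply: (IHN x m n.+1 _ Nx (lpoly_nonunits_lower_deg Nx le_nm P P') P').
  by rewrite addSn ltnS in le_mnN.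
have P'' : lpoly M x^-1^-1 m.+1 1 by rewrite invrK.
apply: (IHN x m.+1 n _ Nx P (lpoly_nonunits_lower_deg (normalizesV Nx) (ltnW lt_mn) P' P'')).
by rewrite addnS ltnS in le_mnN.
Qed.

Lemma prime_ideal_rootX P m k : prime_ideal R P -> R m -> m != 0 -> P (m ^+ k.+1) -> P m.
Proof.
move=> [[[_ lP] _] [_ primeP]] Rm nz_m; have Nm := normalizes_nonzero Rm nz_m.
elim: k => [|k IHk] Pmk; first by rewrite expr1 in Pmk.
apply: IHk; have [Umk RmkX _] := normalizesX k.+1 Nm; have Rmk := subringX subR k.+1 Rm.
have prodP a b : lprincipal R (m ^+ k.+1) a -> lprincipal R m b -> P (a * b).
  move=> [r [Rr ->]] [s [Rs ->]].
  have -> : r * m ^+ k.+1 * (s * m) = r * (m ^+ k.+1 * s * (m ^+ k.+1)^-1) * m ^+ k.+2.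
    by rewrite [m ^+ k.+2]exprSr !mulrA mulrVK.
  exact: (lP _ _ (subringM subR Rr (RmkX _ Rs)) Pmk).
have [AP | BP] := primeP _ _ (lprincipal_ideal subR Rmk (normalizesX k.+1 Nm))
  (lprincipal_ideal subR Rm Nm) prodP.
  exact: AP _ (lprincipal_self subR _).
by rewrite exprSr; apply: (lP _ _ (subringX subR k Rm) (BP _ (lprincipal_self subR m))).
Qed.

Lemma nonunits_prime : prime_ideal R M.
Proof.
split; first exact: nonunits_ideal.
split; first exact: (nonunits_proper subR).
move=> A B [[[AR _] _] _] [[[BR _] _] _] prodM.
apply: NNPP => /not_or_and[notAM notBM].
have [a notAMa] := not_all_ex_not _ _ notAM; have [Aa notMa] := imply_to_and _ _ notAMa.
have [b notBMb] := not_all_ex_not _ _ notBM; have [Bb notMb] := imply_to_and _ _ notBMb.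
have /unit_ofP[Ra Ua Rai] := unit_of_nonunitsN (AR a Aa) notMa.
have /unit_ofP[Rb Ub Rbi] := unit_of_nonunitsN (BR b Bb) notMb.
have [_] := prodM a b Aa Bb; apply; apply/unit_ofP.
by rewrite unitrMl // invrM //; split=> //; apply: (subringM subR).
Qed.

Lemma prime_ideal_nonunits P : prime_ideal R P -> nonzero_set P -> seteq P M.
Proof.
move=> Pprime [p [Pp /eqP nz_p]] m.
have [[[[_ [P0 _]] _] [_ rP]] [properP _]] := Pprime.
split=> [Pm | Mm]; first exact: (left_ideal_nonunits subR Pprime.1.1 properP).
have [-> // | nz_m] := eqVneq m 0.
have [k Rk] := nonunits_mulXn Mm nz_m p^-1.
have Pmk : P (m ^+ k).
  by rewrite -(mulVKr (divring_unit divD nz_p) (m ^+ k)); apply: rP Rk Pp.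
by apply: (prime_ideal_rootX Pprime Mm.1 nz_m (k := k)); rewrite exprSr; apply: rP Mm.1 Pmk.
Qed.

Lemma right_duo_of_left : right_duo R.
Proof.
move=> I rI; split=> //; split; first exact: rI.1.
move=> r z Rr Iz; have [-> | nz_z] := eqVneq z 0; first by rewrite mulr0; apply: rI.1.2.1.
have [Uz _ RconjV] := normalizes_nonzero (rI.1.1 z Iz) nz_z.
have -> : r * z = z * (z^-1 * r * z) by rewrite !mulrA mulrV ?mul1r.
exact: rI.2 (RconjV r Rr) Iz.
Qed.

Lemma ore_domain_maximal : ore_domain R.
Proof.
split; first by move=> a b _ _; apply: divring_mul_eq0.
split=> a b Ra Rb /eqP nz_a /eqP nz_b.
  have [Ub Rconj _] := normalizes_nonzero Rb nz_b; have Ua := divring_unit divD nz_a.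
  exists b, (b * a * b^-1); do ![split=> //]; [exact: Rconj | exact/eqP | | by rewrite mulrVK].
  by apply/eqP/unitr_neq0; rewrite !unitrMl ?unitrV.
have [Ua _ RconjV] := normalizes_nonzero Ra nz_a; have Ub := divring_unit divD nz_b.
exists (a^-1 * b * a), a; do ![split=> //]; [exact: RconjV | | exact/eqP | ].
  by apply/eqP/unitr_neq0; rewrite !unitrMl ?unitrV.
by rewrite !mulrA mulrV ?mul1r.
Qed.

Section NonDivision.
Hypothesis ndR : ~ is_division R.

Lemma valuation_maximal x : x != 0 -> R x \/ R x^-1.
Proof.
move=> nz_x; apply: NNPP => /not_or_and [notRx notRxi].
have [a [Ma /eqP nz_a]] := nonunits_nonzero ndR.
have Ua := divring_unit divD nz_a; have Ux := divring_unit divD nz_x.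
have [k Rxa] := nonunits_mulXn Ma nz_a x.
have Nxa : normalizes R (x * a ^+ k).
  by apply: normalizes_nonzero Rxa _; apply: unitr_neq0; rewrite unitrMl ?unitrX.
have Nx : normalizes R x.
  rewrite -[x](mulrK (unitrX k Ua)) -exprVn.
  exact: normalizesM Nxa (normalizesX k (normalizesV (normalizes_nonzero Ma.1 nz_a))).
have [[_ Rconj _] [UxV RconjV _]] := (Nx, normalizesV Nx).
have [m Pm] := maximal_subring_adjoin maxR Ux Rconj notRx a^-1.
have [n Pn] := maximal_subring_adjoin maxR UxV RconjV notRxi a^-1.
have aM r : R r -> M (a * r) := fun Rr => nonunits_rmul divD subR Rr Ma.
have P1 : lpoly M x m 1 by rewrite -(mulrV Ua); apply: lpoly_lmul aM Pm.
have P1' : lpoly M x^-1 n 1 by rewrite -(mulrV Ua); apply: lpoly_lmul aM Pn.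
exact: no_lpoly_nonunits_one Nx P1 P1'.
Qed.

Lemma normalizes_divring d : d != 0 -> normalizes R d.
Proof.
move=> nz_d; have [Rd | Rdi] := valuation_maximal nz_d; first exact: normalizes_nonzero.
by rewrite -[d]invrK; apply/normalizesV/normalizes_nonzero; rewrite ?invr_eq0.
Qed.

Lemma G_domain_maximal : G_domain R.
Proof.
split=> [a b _ _ | ]; first exact: divring_mul_eq0.
have [a [Ma nz_a]] := nonunits_nonzero ndR; exists a; split; first exact: Ma.1.
by split=> // P Pprime nzP; apply/(prime_ideal_nonunits Pprime nzP).
Qed.

End NonDivision.

End MaximalLeftDuo.

Unset Implicit Arguments.

Theorem proposition3p2 (D : unitRingType) (R : D -> Prop) :
  division_ringP D -> maximal_subring R -> left_duo R ->
  duo R /\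
  (is_division R \/
   (ore_domain R /\ G_domain R /\
    prime_ideal R (nonunits R) /\ nonzero_set (nonunits R) /\
    (forall P, prime_ideal R P -> nonzero_set P -> seteq P (nonunits R)))) /\
  (~ is_division R ->
   (forall x : D, x <> 0 -> R x \/ R x^-1) /\
   (maximal_left_ideal R (nonunits R) /\
    forall I, maximal_left_ideal R I -> seteq I (nonunits R)) /\
   (maximal_right_ideal R (nonunits R) /\
    forall I, maximal_right_ideal R I -> seteq I (nonunits R)) /\
   (maximal_ideal R (nonunits R) /\
    forall I, maximal_ideal R I -> seteq I (nonunits R)) /\
   (prime_ideal R (nonunits R) /\ nonzero_set (nonunits R) /\
    forall P, prime_ideal R P -> nonzero_set P -> seteq P (nonunits R)) /\
   (forall d : D, d <> 0 ->
      conj_stable d R /\ conj_stable d (nonunits R))).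
Proof.
move=> divD maxR duoR; have subR := proj1 maxR.
have [idealM properM] := (nonunits_ideal divD maxR duoR, nonunits_proper subR).
have uniqM := @prime_ideal_nonunits _ _ divD maxR duoR.
split; first exact: (conj duoR (right_duo_of_left divD maxR duoR)).
have [divR | ndivR] := classic (is_division R); first by split; [left | ].
have primeM := conj (nonunits_prime divD maxR duoR) (conj (nonunits_nonzero ndivR) uniqM).
split.
  right; split; first exact: ore_domain_maximal divD maxR duoR.
  by split; first exact: G_domain_maximal ndivR.
move=> _; split=> [x /eqP nz_x | ]; first exact: valuation_maximal divD maxR duoR ndivR x nz_x.
split; first exact: maximal_among_greatest idealM.1 properM (left_ideal_nonunits subR).
split; first exact: maximal_among_greatest idealM.2 properM (right_ideal_nonunits subR).
split; first exact: (maximal_among_greatest (K := ideal R) idealM properM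
  (fun I iI => left_ideal_nonunits subR iI.1)).
split; first exact: primeM.
move=> d /eqP nz_d; have Nd := normalizes_divring divD maxR duoR ndivR nz_d.
by split; [apply: normalizes_conj_stable | apply: nonunits_conj_stable].
Qed.
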